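(* Let $\mathcal X$ be a finite multi-set of real symmetric $2\times2$ matrices with $\lambda_1$ the unique largest eigenvalue of $\mathcal X$ (with eigenvector $u_1$, belonging to $X_1$, and $v_1\perp u_1$ a unit vector). Suppose the second largest eigenvalue $\lambda_2$ of $\mathcal X$ is unique and its associated eigenvector $u_2$ is not perpendicular to $u_1$. Then there exists $\varepsilon>0$ such that $$S':=\lambda_1u_1u_1^{\mathsf T}+(\lambda_2-\varepsilon)v_1v_1^{\mathsf T}\in\mathcal U(\mathcal X).$$
   Context: $\mathrm{Sym}(2)$ is the set of real symmetric $2\times2$ matrices; $A\le_{\mathrm L}B$ (Loewner order) means $B-A$ is positive semidefinite. $\mathcal U(\mathcal X):=\{Y\in\mathrm{Sym}(2):X\le_{\mathrm L}Y\ \forall X\in\mathcal X\}$. Each $X\in\mathcal X$ has spectral form $X=\lambda uu^{\mathsf T}+\mu vv^{\mathsf T}$, $\lambda\ge\mu$, $u\perp v$ unit vectors; ''the eigenvalues of $\mathcal X$'' means the multi-set of all these $\lambda,\mu$ (two per matrix) with their associated eigenvectors; an eigenvalue is unique if it occurs exactly once in this multi-set. *)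

From HB Require Import structures.
From mathcomp Require Import all_boot all_order all_algebra.
Set Implicit Arguments. Unset Strict Implicit. Unset Printing Implicit Defensive.
Import Order.TTheory GRing.Theory Num.Theory.
Local Open Scope ring_scope.

Section Defs.
Variable R : realFieldType.

Definition dot2 (x y : 'cV[R]_2) : R := (x^T *m y) 0 0.

Definition sym2 (A : 'M[R]_2) : Prop := A^T = A.

Definition psd2 (A : 'M[R]_2) : Prop :=
  sym2 A /\ forall x : 'cV[R]_2, 0 <= (x^T *m A *m x) 0 0.

Definition loewner_le (A B : 'M[R]_2) : Prop := psd2 (B - A).

(* U(X) for a finite family (multi-set) X indexed by a finite type I. *)
Definition upper_set (I : finType) (X : I -> 'M[R]_2) (Y : 'M[R]_2) : Prop :=
  sym2 Y /\ forall i, loewner_le (X i) Y.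

Definition proj2 (u : 'cV[R]_2) : 'M[R]_2 := u *m u^T.

Definition spectral_form (I : finType) (X : I -> 'M[R]_2)
    (lam mu : I -> R) (u v : I -> 'cV[R]_2) : Prop :=
  forall i, [/\ X i = lam i *: proj2 (u i) + mu i *: proj2 (v i),
                mu i <= lam i, dot2 (u i) (u i) = 1, dot2 (v i) (v i) = 1
              & dot2 (u i) (v i) = 0].

(* The multi-set of eigenvalues: two entries per matrix, indexed by I * bool
   (true = the larger eigenvalue lam with eigenvector u, false = mu with v). *)
Definition eigval (I : finType) (lam mu : I -> R) (e : I * bool) : R :=
  if e.2 then lam e.1 else mu e.1.
Definition eigvec (I : finType) (u v : I -> 'cV[R]_2) (e : I * bool) : 'cV[R]_2 :=
  if e.2 then u e.1 else v e.1.

End Defs.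

From HB Require Import structures.
From mathcomp Require Import all_boot all_order all_algebra.
From mathcomp Require Import ring lra.
Import Order.TTheory GRing.Theory Num.Theory.
Local Open Scope ring_scope.

(* Write S' = lam1 u1 u1^T + t v1 v1^T with t = lam2 - eps and compare
   quadratic forms.  For X1 the u1-parts cancel and only mu1 <= t is needed.  Every other matrix except
   X2 has both eigenvalues at most lam3 < lam2, so it lies below t I <= S' once
   eps <= lam2 - lam3.  For X2, writing u2 = c u1 + s v1 with c <> 0, the form
   of S' - X2 is (al + d) p^2 + (d - eps) q^2 - d (c p + s q)^2 with
   al = lam1 - lam2 and d = lam2 - mu2, which stays nonnegative as long as
   eps (al + d) <= al d c^2. *)

Section Orthonormal.
Context {R : realFieldType}.
Implicit Types (a b w x y : 'cV[R]_2) (A B : 'M[R]_2) (l m : R).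

Definition orthonormal2 a b : Prop :=
  [/\ dot2 a a = 1, dot2 b b = 1 & dot2 a b = 0].

Lemma dot2C x y : dot2 x y = dot2 y x.
Proof. by rewrite /dot2 -[x^T *m y]trmxK trmx_mul trmxK mxE. Qed.

Definition mxform A x y : R := (x^T *m A *m y) 0 0.

Lemma mxformD A B x y : mxform (A + B) x y = mxform A x y + mxform B x y.
Proof. by rewrite /mxform mulmxDr mulmxDl mxE. Qed.

Lemma mxformB A B x y : mxform (A - B) x y = mxform A x y - mxform B x y.
Proof. by rewrite /mxform mulmxBr mulmxBl !mxE. Qed.

Lemma mxformZ c A x y : mxform (c *: A) x y = c * mxform A x y.
Proof. by rewrite /mxform -scalemxAr -scalemxAl mxE. Qed.

Lemma mxform1 x y : mxform 1%:M x y = dot2 x y.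
Proof. by rewrite /mxform mulmx1. Qed.

Lemma mxform_proj2 w x y : mxform (proj2 w) x y = dot2 x w * dot2 w y.
Proof.
by rewrite /mxform /proj2 mulmxA -mulmxA [w^T *m y]mx11_scalar mul_mx_scalar mxE mulrC.
Qed.

Lemma mxform_pencil l m a b x :
  mxform (l *: proj2 a + m *: proj2 b) x x = l * dot2 a x ^+ 2 + m * dot2 b x ^+ 2.
Proof. by rewrite mxformD !mxformZ !mxform_proj2 ![dot2 x _]dot2C. Qed.

Lemma sym2_pencil l m a b : sym2 (l *: proj2 a + m *: proj2 b).
Proof. by rewrite /sym2 linearD /= !linearZ /= /proj2 !trmx_mul !trmxK. Qed.

(* The Gram matrix of the rows of [col_mx a^T b^T] is the identity, hence so
   is that of its columns. *)
Lemma proj2_orthonormal a b : orthonormal2 a b -> proj2 a + proj2 b = 1%:M.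
Proof.
case=> ha hb hab; pose M : 'M[R]_(1 + 1, 2) := col_mx a^T b^T.
have MMt : M *m M^T = 1%:M.
  rewrite /M tr_col_mx !trmxK mul_col_row (scalar_mx_block 1 1 1).
  rewrite [a^T *m a]mx11_scalar [b^T *m b]mx11_scalar [a^T *m b]mx11_scalar.
  rewrite [b^T *m a]mx11_scalar -/(dot2 a a) -/(dot2 b b) -/(dot2 a b) -/(dot2 b a).
  by rewrite [dot2 b a]dot2C ha hb hab raddf0.
by have := mulmx1C MMt; rewrite /M tr_col_mx !trmxK mul_row_col.
Qed.

Lemma dot2_orthonormal a b x y : orthonormal2 a b ->
  dot2 x y = dot2 x a * dot2 a y + dot2 x b * dot2 b y.
Proof.
by move=> hab; rewrite -mxform1 -(proj2_orthonormal _ _ hab) mxformD !mxform_proj2.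
Qed.

Lemma sqr_dot2_orthonormal a b x : orthonormal2 a b ->
  dot2 a x ^+ 2 + dot2 b x ^+ 2 = dot2 x x.
Proof. by move=> hab; rewrite (dot2_orthonormal _ _ x x hab) ![dot2 x _]dot2C !expr2. Qed.

Lemma loewner_le_pencil l m a b l' m' a' b' :
  (forall x, l * dot2 a x ^+ 2 + m * dot2 b x ^+ 2
             <= l' * dot2 a' x ^+ 2 + m' * dot2 b' x ^+ 2) ->
  loewner_le (l *: proj2 a + m *: proj2 b) (l' *: proj2 a' + m' *: proj2 b').
Proof.
move=> hle; split=> [|x].
  by rewrite /sym2 linearB /= !sym2_pencil.
by rewrite -/(mxform _ x x) mxformB !mxform_pencil subr_ge0.
Qed.

End Orthonormal.

(* Multiplying the quadratic form by [al + d s^2 > 0] completes the square in [p]. *)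
Lemma tilted_quadratic_ge0 {R : realFieldType} (p q al d c s eps : R) :
  0 < al -> 0 < d -> c ^+ 2 + s ^+ 2 = 1 -> 0 <= eps ->
  eps * (al + d) <= al * d * c ^+ 2 ->
  0 <= (al + d) * p ^+ 2 + (d - eps) * q ^+ 2 - d * (c * p + s * q) ^+ 2.
Proof.
move=> hal hd hcs he hle.
set Q := _ - _; set T := al + d * s ^+ 2.
have hT : 0 < T by rewrite /T; have := sqr_ge0 s; nra.
have hTQ : T * Q = (T * p - d * c * s * q) ^+ 2 + (al * d * c ^+ 2 - eps * T) * q ^+ 2
    - T * d * (c ^+ 2 + s ^+ 2 - 1) * (p ^+ 2 + q ^+ 2) by rewrite /Q /T; ring.
rewrite hcs subrr mulr0 mul0r subr0 in hTQ.
have hT_le : eps * T <= eps * (al + d).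
  by rewrite /T; apply: ler_wpM2l => //; have := sqr_ge0 c; nra.
have : 0 <= T * Q.
  by rewrite hTQ addr_ge0 ?sqr_ge0 // mulr_ge0 ?sqr_ge0 //; lra.
by rewrite pmulr_rge0.
Qed.

Section Domination.
Context {R : realFieldType}.
Context {u1 v1 : 'cV[R]_2} {lam1 t : R}.
Hypothesis u1v1 : orthonormal2 u1 v1.
Implicit Types (a b w : 'cV[R]_2) (l m : R).

Let S := lam1 *: proj2 u1 + t *: proj2 v1.

Lemma loewner_le_common_axis {m w} : orthonormal2 u1 w -> m <= t ->
  loewner_le (lam1 *: proj2 u1 + m *: proj2 w) S.
Proof.
move=> u1w hmt; apply: loewner_le_pencil => x.
have -> : dot2 w x ^+ 2 = dot2 v1 x ^+ 2.
  by apply: (addrI (dot2 u1 x ^+ 2)); rewrite !sqr_dot2_orthonormal.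
have : 0 <= (t - m) * dot2 v1 x ^+ 2 by rewrite mulr_ge0 ?sqr_ge0 ?subr_ge0.
lra.
Qed.

Lemma loewner_le_below {l m a b} : orthonormal2 a b ->
  m <= l -> l <= t -> t <= lam1 -> loewner_le (l *: proj2 a + m *: proj2 b) S.
Proof.
move=> ab hml hlt htl; apply: loewner_le_pencil => x.
have : t * (dot2 a x ^+ 2 + dot2 b x ^+ 2) = t * (dot2 u1 x ^+ 2 + dot2 v1 x ^+ 2).
  by rewrite !sqr_dot2_orthonormal.
have : 0 <= (l - m) * dot2 b x ^+ 2 by rewrite mulr_ge0 ?sqr_ge0 ?subr_ge0.
have : 0 <= (t - l) * (dot2 a x ^+ 2 + dot2 b x ^+ 2).
  by rewrite mulr_ge0 ?subr_ge0 // addr_ge0 ?sqr_ge0.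
have : 0 <= (lam1 - t) * dot2 u1 x ^+ 2 by rewrite mulr_ge0 ?sqr_ge0 ?subr_ge0.
lra.
Qed.

Lemma loewner_le_tilted {l m a b} : orthonormal2 a b ->
  m < l -> l < lam1 -> t <= l ->
  (l - t) * (lam1 - m) <= (lam1 - l) * (l - m) * dot2 a u1 ^+ 2 ->
  loewner_le (l *: proj2 a + m *: proj2 b) S.
Proof.
move=> ab hml hl1 htl hgap; apply: loewner_le_pencil => x.
have ha : dot2 a x = dot2 a u1 * dot2 u1 x + dot2 a v1 * dot2 v1 x.
  by rewrite (dot2_orthonormal _ _ a x u1v1).
have hcs : dot2 a u1 ^+ 2 + dot2 a v1 ^+ 2 = 1.
  by rewrite ![dot2 a _]dot2C sqr_dot2_orthonormal //; case: ab.
have hb : dot2 b x ^+ 2 = dot2 u1 x ^+ 2 + dot2 v1 x ^+ 2 - dot2 a x ^+ 2.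
  rewrite (sqr_dot2_orthonormal _ _ x u1v1) -(sqr_dot2_orthonormal _ _ x ab).
  by rewrite addrAC subrr add0r.
have hal : 0 < lam1 - l by rewrite subr_gt0.
have hd : 0 < l - m by rewrite subr_gt0.
have heps : 0 <= l - t by rewrite subr_ge0.
have := tilted_quadratic_ge0 (dot2 u1 x) (dot2 v1 x) _ _ _ _ _ hal hd hcs heps.
have -> : lam1 - l + (l - m) = lam1 - m by ring.
move=> /(_ hgap).
rewrite hb ha; lra.
Qed.

End Domination.

Lemma uniform_gap {R : realFieldType} {T : finType} (P : pred T) (f : T -> R) (m : R) :
  (forall e, P e -> f e < m) -> exists2 g, 0 < g & forall e, P e -> f e + g <= m.
Proof.
move=> hlt; case: (pickP P) => [e0 Pe0 | noP]; last by exists 1 => // e; rewrite noP.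
case: (arg_maxP f Pe0) => e Pe emax; exists (m - f e); first by rewrite subr_gt0 hlt.
by move=> e' /emax /= h; lra.
Qed.

Section EigenvalueOrder.
Context {R : realFieldType} {I : finType}.
Context {lam mu : I -> R}.
Hypothesis mu_le_lam : forall i, mu i <= lam i.

Lemma largest_eigval_is_lam {e1} :
  (forall e, e != e1 -> eigval lam mu e < eigval lam mu e1) -> e1.2.
Proof.
case: e1 => i [] //= H1; have := H1 (i, true).
by rewrite xpair_eqE andbF /eigval /= => /(_ isT); rewrite ltNge mu_le_lam.
Qed.

Lemma second_eigval_is_lam {e1 e2} :
  (forall e, e != e1 -> e != e2 -> eigval lam mu e < eigval lam mu e2) ->
  e2.1 != e1.1 -> e2.2.
Proof.
case: e1 e2 => i1 b1 [i2 []] //= H2 hi; have := H2 (i2, true).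
rewrite !xpair_eqE (negbTE hi) andbF /eigval /= => /(_ isT isT).
by rewrite ltNge mu_le_lam.
Qed.

End EigenvalueOrder.

Lemma eigvec_index_neq {R : realFieldType} {I : finType} {u v : I -> 'cV[R]_2} {i1 e2} :
  (forall i, dot2 (u i) (v i) = 0) -> e2 != (i1, true) ->
  dot2 (eigvec u v e2) (u i1) != 0 -> e2.1 != i1.
Proof.
case: e2 => i [] huv /=; first by rewrite xpair_eqE andbT.
by move=> _; apply: contra => /eqP ->; rewrite /eigvec /= dot2C huv.
Qed.

Lemma small_tilt_exists {R : realFieldType} (g al d c2 : R) :
  0 < g -> 0 < al -> 0 < d -> 0 < c2 ->
  exists eps, [/\ 0 < eps, eps <= g & eps * (al + d) <= al * d * c2].
Proof.
move=> g_gt0 al_gt0 d_gt0 c2_gt0; have ad_gt0 : 0 < al + d by rewrite addr_gt0.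
exists (Order.min g (al * d * c2 / (al + d))); split.
- by rewrite lt_min g_gt0 !divr_gt0 ?mulr_gt0.
- by rewrite ge_min lexx.
- by rewrite -ler_pdivlMr // ge_min lexx orbT.
Qed.

Section TiltedUpperBound.
Context {R : realFieldType} {I : finType} {X : I -> 'M[R]_2}.
Context {lam mu : I -> R} {u v : I -> 'cV[R]_2}.
Hypothesis spec : spectral_form X lam mu u v.
Context {i1 i2 : I} {v1 : 'cV[R]_2}.
Hypothesis u1v1 : orthonormal2 (u i1) v1.
Hypotheses (lam21 : lam i2 < lam i1) (mu2 : mu i2 < lam i2).
Hypothesis lam2_second : forall e, e != (i1, true) -> e != (i2, true) ->
  eigval lam mu e < lam i2.
Hypothesis u2u1_neq0 : dot2 (u i2) (u i1) != 0.

Lemma upper_set_tilted : exists2 eps, 0 < eps &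
  upper_set X (lam i1 *: proj2 (u i1) + (lam i2 - eps) *: proj2 v1).
Proof.
have onb i : orthonormal2 (u i) (v i) by case: (spec i).
have [g g_gt0 hg] : exists2 g, 0 < g & forall e,
    (e != (i1, true)) && (e != (i2, true)) -> eigval lam mu e + g <= lam i2.
  by apply: uniform_gap => e /andP[]; exact: lam2_second.
have [|||eps [eps_gt0 eps_le_g eps_tilt]] :=
  @small_tilt_exists _ g (lam i1 - lam i2) (lam i2 - mu i2) (dot2 (u i2) (u i1) ^+ 2) g_gt0.
- by rewrite subr_gt0.
- by rewrite subr_gt0.
- by rewrite exprn_even_gt0.
exists eps => //; split => [|i]; first exact: sym2_pencil.
have [-> _ _ _ _] := spec i.
case: (eqVneq i i1) => [-> | ne1].
  apply: loewner_le_common_axis => //.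
  have := hg (i1, false); rewrite !xpair_eqE /= !andbF => /(_ isT).
  by rewrite /eigval /=; lra.
case: (eqVneq i i2) => [-> | ne2].
  apply: (loewner_le_tilted u1v1 (onb i2) mu2 lam21); first lra.
  have -> : lam i2 - (lam i2 - eps) = eps by ring.
  by have -> : lam i1 - mu i2 = lam i1 - lam i2 + (lam i2 - mu i2) by ring.
have [_ mu_le_lam _ _ _] := spec i.
apply: (loewner_le_below u1v1 (onb i) mu_le_lam); last by move: lam21; lra.
have := hg (i, true); rewrite !xpair_eqE /= !andbT ne1 ne2 => /(_ isT).
by rewrite /eigval /=; lra.
Qed.

End TiltedUpperBound.

Theorem lemma7 (R : realFieldType) (I : finType) (X : I -> 'M[R]_2)
    (lam mu : I -> R) (u v : I -> 'cV[R]_2)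
    (Hspec : spectral_form X lam mu u v)
    (e1 e2 : I * bool) (v1 : 'cV[R]_2)
    (H1 : forall e, e != e1 -> eigval lam mu e < eigval lam mu e1)
    (Hv1 : dot2 v1 v1 = 1) (Hv1u1 : dot2 (eigvec u v e1) v1 = 0)
    (H12 : e2 != e1)
    (H2 : forall e, e != e1 -> e != e2 -> eigval lam mu e < eigval lam mu e2)
    (Hperp : dot2 (eigvec u v e2) (eigvec u v e1) != 0) :
  exists eps : R, 0 < eps /\
    upper_set X (eigval lam mu e1 *: proj2 (eigvec u v e1)
                 + (eigval lam mu e2 - eps) *: proj2 v1).
Proof.
have mu_le_lam i : mu i <= lam i by case: (Hspec i).
have onb i : orthonormal2 (u i) (v i) by case: (Hspec i).
have uv_orth i : dot2 (u i) (v i) = 0 by case: (onb i).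
case: e1 H1 Hv1u1 H12 H2 Hperp => i1 [] H1 Hv1u1 H12 H2 Hperp; last first.
  by have := largest_eigval_is_lam mu_le_lam H1.
have i2_neq := eigvec_index_neq uv_orth H12 Hperp.
case: e2 H12 H2 Hperp i2_neq => i2 [] H12 H2 Hperp /= i2_neq; last first.
  by have := second_eigval_is_lam mu_le_lam H2 i2_neq.
have u1v1 : orthonormal2 (u i1) v1 by split; case: (onb i1).
have lam21 : lam i2 < lam i1 by apply: (H1 (i2, true)); rewrite xpair_eqE negb_and i2_neq.
have mu2 : mu i2 < lam i2.
  by apply: (H2 (i2, false)); rewrite xpair_eqE negb_and ?i2_neq ?orbT.
have [eps eps_gt0 hU] := upper_set_tilted Hspec u1v1 lam21 mu2 H2 Hperp.
by exists eps.
Qed.
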